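(* Let $k>1$ and let $f$ be a positive differentiable function on $[0,1]$ such that $f$ is constant or $f$ is non-increasing. Consider the planar system $$\frac{dI}{d\tau}=I\,[f(R)(1-I-R)-k],\qquad \frac{dR}{d\tau}=(k-1)I-R.$$ If $f(0)/k<1$, then the system has no endemic equilibrium points. If $f(0)/k>1$, then the system has a unique endemic equilibrium point, and this endemic equilibrium point is locally stable.
   Context: An endemic equilibrium is an equilibrium point $(I^*,R^* )$ of the system with $I^*>0$. ''Locally stable'' means locally asymptotically stable (both eigenvalues of the Jacobian at the point have negative real part). *)

From Stdlib Require Import Reals.
From Coquelicot Require Import Coquelicot.
Open Scope R_scope.

Definition dI (f : R -> R) (k i r : R) : R := i * (f r * (1 - i - r) - k).
Definition dR (k i r : R) : R := (k - 1) * i - r.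

(* Biologically meaningful state space (fractions of the population). *)
Definition in_domain (i r : R) : Prop := 0 <= i /\ 0 <= r /\ i + r <= 1.

Definition equilibrium (f : R -> R) (k i r : R) : Prop :=
  in_domain i r /\ dI f k i r = 0 /\ dR k i r = 0.

Definition endemic_equilibrium (f : R -> R) (k i r : R) : Prop :=
  equilibrium f k i r /\ 0 < i.

(* Locally (asymptotically) stable: the Jacobian [[a b];[c d]] of the vector
   field (its partial derivatives) exists at (i,r), and every (complex)
   eigenvalue l, i.e. every root of det(J - l Id) = (a-l)(d-l) - b c, has
   negative real part. *)
Definition locally_stable (f : R -> R) (k i r : R) : Prop :=
  exists a b c d : R,
    derivable_pt_lim (fun x => dI f k x r) i a /\
    derivable_pt_lim (fun y => dI f k i y) r b /\
    derivable_pt_lim (fun x => dR k x r) i c /\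
    derivable_pt_lim (fun y => dR k i y) r d /\
    forall l : C,
      Cminus (Cmult (Cminus (RtoC a) l) (Cminus (RtoC d) l))
             (Cmult (RtoC b) (RtoC c)) = RtoC 0 ->
      Re l < 0.

From Stdlib Require Import Reals Lra Psatz Ranalysis5.
From Coquelicot Require Import Coquelicot.
Open Scope R_scope.

(* At an endemic equilibrium [r = (k-1) i], so [i + r = a r] with [a = k/(k-1)],
   and [dI = 0] becomes [h r = 0] for [h r = f r (1 - a r) - k].  As [f] is
   positive and non-increasing, [h] decreases strictly on [0, 1/a], from
   [h 0 = f 0 - k] to [h (1/a) = -k]: it has no root there if [f 0 < k], and
   exactly one, by the intermediate value theorem, if [f 0 > k].  At that root
   the Jacobian has negative trace and, because [f' r <= 0], positive
   determinant. *)

Lemma derivable_pt_lim_nonincreasing_le0 (f : R -> R) (lo hi x l : R) :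
  (forall u v, lo <= u -> u <= v -> v <= hi -> f v <= f u) ->
  lo <= x < hi -> derivable_pt_lim f x l -> l <= 0.
Proof.
  intros f_noninc [lo_x x_hi] df.
  destruct (Rle_dec l 0) as [|l_pos]; [assumption|].
  destruct (df l ltac:(lra)) as [[del del_pos] close].
  set (t := Rmin (del / 2) ((hi - x) / 2)).
  assert (t_del : t <= del / 2) by apply Rmin_l.
  assert (t_hi : t <= (hi - x) / 2) by apply Rmin_r.
  assert (t_pos : 0 < t) by (apply Rmin_pos; lra).
  specialize (close t ltac:(lra) ltac:(rewrite Rabs_right; simpl; lra)).
  assert (quot_le0 : (f (x + t) - f x) / t <= 0).
  { assert (f (x + t) <= f x) by (apply f_noninc; lra).
    assert ((f (x + t) - f x) / t * t = f (x + t) - f x) by (field; lra). nra. }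
  apply Rabs_def2 in close. lra.
Qed.

Lemma charpoly2_root_Re_lt0 (a b c d : R) :
  a + d < 0 -> 0 < a * d - b * c ->
  forall l : C,
    Cminus (Cmult (Cminus (RtoC a) l) (Cminus (RtoC d) l))
           (Cmult (RtoC b) (RtoC c)) = RtoC 0 ->
    Re l < 0.
Proof.
  intros trace_neg det_pos [x y] root.
  unfold Cminus, Cmult, Cplus, Copp, RtoC in root; simpl in root.
  injection root as re_eq im_eq; simpl.
  destruct (Rlt_dec x 0) as [|x_nonneg]; [assumption|].
  assert (y = 0) by nra. subst y. nra.
Qed.

Section EndemicEquilibria.

Variables (k : R) (f : R -> R).
Hypothesis k_gt1 : 1 < k.
Hypothesis f_pos : forall x, 0 <= x <= 1 -> 0 < f x.
Hypothesis f_derivable : forall x, 0 <= x <= 1 -> exists l, derivable_pt_lim f x l.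
Hypothesis f_noninc : forall x y, 0 <= x -> x <= y -> y <= 1 -> f y <= f x.

Let a := k / (k - 1).
Let h (r : R) : R := f r * (1 - a * r) - k.

Lemma a_gt1 : 1 < a.
Proof. unfold a. apply (Rmult_lt_reg_r (k - 1)); [lra|]. field_simplify; lra. Qed.

Lemma endemic_equilibriumE (i r : R) :
  endemic_equilibrium f k i r <-> i = r / (k - 1) /\ 0 < r /\ a * r <= 1 /\ h r = 0.
Proof.
  assert (sum_eq : forall i, i = r / (k - 1) -> i + r = a * r).
  { intros j ->. unfold a. field. lra. }
  unfold endemic_equilibrium, equilibrium, in_domain, dI, dR, h.
  split.
  - intros [[[i_ge0 [r_ge0 ir_le1]] [dI_0 dR_0]] i_pos].
    apply Rmult_integral in dI_0 as [|dI_0]; [lra|].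
    assert (i_eq : i = r / (k - 1)) by (replace r with ((k - 1) * i) by lra; field; lra).
    pose proof (sum_eq i i_eq) as ir_eq.
    repeat split; [assumption|nra|lra|].
    replace (1 - a * r) with (1 - i - r); lra.
  - intros (i_eq & r_pos & ar_le1 & h_0).
    pose proof (sum_eq i i_eq) as ir_eq.
    assert (i_pos : 0 < i) by (rewrite i_eq; apply Rdiv_lt_0_compat; lra).
    repeat split; try lra.
    + replace (1 - i - r) with (1 - a * r) by lra. rewrite h_0. ring.
    + subst i. field. lra.
Qed.

Lemma h_strict_decr (x y : R) : 0 <= x < y -> a * y <= 1 -> h y < h x.
Proof.
  intros [x_ge0 x_lt_y] ay_le1. pose proof a_gt1.
  assert (f y <= f x) by (apply f_noninc; nra).
  assert (0 < f x) by (apply f_pos; nra).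
  assert (f y * (1 - a * y) <= f x * (1 - a * y)) by (apply Rmult_le_compat_r; lra).
  assert (f x * (a * x) < f x * (a * y)) by (apply Rmult_lt_compat_l; nra).
  unfold h. lra.
Qed.

Lemma h_continuous (x : R) : 0 <= x <= 1 -> continuity_pt h x.
Proof.
  intros x_01. destruct (f_derivable x x_01) as [l df].
  apply continuity_pt_minus; [|apply continuity_pt_const; intros ? ?; reflexivity].
  apply continuity_pt_mult.
  - apply derivable_continuous_pt. exists l. exact df.
  - apply continuity_pt_minus; [apply continuity_pt_const; intros ? ?; reflexivity|].
    apply continuity_pt_scal, derivable_continuous_pt, derivable_pt_id.
Qed.

Lemma h_root_exists : k < f 0 -> exists r, 0 < r /\ a * r <= 1 /\ h r = 0.
Proof.
  intros f0_gt_k. pose proof a_gt1.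
  assert (a_inv : a * / a = 1) by (field; lra).
  assert (inv_a_pos : 0 < / a) by (apply Rinv_0_lt_compat; lra).
  destruct (IVT_interv (fun x => - h x) 0 (/ a)) as (r & r_range & h_r); try lra.
  - intros x x_range. apply continuity_pt_opp, h_continuous.
    assert (a * x <= 1) by nra. nra.
  - unfold h. rewrite Rmult_0_r. lra.
  - unfold h. rewrite a_inv. lra.
  - exists r. repeat split; try nra.
    destruct (Req_dec r 0) as [->|]; [|lra].
    unfold h in h_r. rewrite Rmult_0_r in h_r. lra.
Qed.

Lemma no_endemic_equilibrium : f 0 <= k -> forall i r, ~ endemic_equilibrium f k i r.
Proof.
  intros f0_le_k i r (_ & r_pos & ar_le1 & h_0)%endemic_equilibriumE.
  assert (h r < h 0) by (apply h_strict_decr; lra).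
  unfold h in *. rewrite Rmult_0_r in *. lra.
Qed.

Lemma endemic_equilibrium_exists : k < f 0 -> exists i r, endemic_equilibrium f k i r.
Proof.
  intros f0_gt_k. destruct (h_root_exists f0_gt_k) as (r & r_pos & ar_le1 & h_0).
  exists (r / (k - 1)), r. apply endemic_equilibriumE. auto.
Qed.

Lemma endemic_equilibrium_unique (i r i' r' : R) :
  endemic_equilibrium f k i r -> endemic_equilibrium f k i' r' -> i' = i /\ r' = r.
Proof.
  intros (i_eq & r_pos & ar_le1 & h_0)%endemic_equilibriumE
         (i'_eq & r'_pos & ar'_le1 & h'_0)%endemic_equilibriumE.
  assert (r_eq : r' = r).
  { destruct (Rtotal_order r' r) as [lt | [eq | gt]]; [|exact eq|].
    - assert (h r < h r') by (apply h_strict_decr; lra). lra.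
    - assert (h r' < h r) by (apply h_strict_decr; lra). lra. }
  subst r'. split; congruence.
Qed.

Lemma endemic_equilibrium_locally_stable (i r : R) :
  endemic_equilibrium f k i r -> locally_stable f k i r.
Proof.
  intros EE. pose proof EE as (i_eq & r_pos & ar_le1 & _)%endemic_equilibriumE.
  destruct EE as [[[i_ge0 [r_ge0 ir_le1]] [dI_0 dR_0]] i_pos].
  apply Rmult_integral in dI_0 as [|dI_0]; [lra|].
  pose proof a_gt1.
  assert (r_lt1 : r < 1) by nra.
  assert (fr_pos : 0 < f r) by (apply f_pos; lra).
  assert (s_pos : 0 < 1 - i - r) by nra.
  destruct (f_derivable r ltac:(lra)) as [l df].
  assert (l_le0 : l <= 0)
    by exact (derivable_pt_lim_nonincreasing_le0 f 0 1 r l f_noninc ltac:(lra) df).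
  exists (f r * (1 - i - r) - k - i * f r), (i * (l * (1 - i - r) - f r)), (k - 1), (-1).
  unfold dI, dR. repeat split.
  - apply is_derive_Reals. auto_derive; [exact I|]. ring.
  - apply is_derive_Reals. apply is_derive_Reals in df. auto_derive.
    + repeat split. exists l. exact df.
    + replace (Derive (fun x => f x) r) with l
        by (symmetry; exact (is_derive_unique _ _ _ df)).
      ring.
  - apply is_derive_Reals. auto_derive; [exact I|]. ring.
  - apply is_derive_Reals. auto_derive; [exact I|]. ring.
  - apply charpoly2_root_Re_lt0; rewrite dI_0; [nra|].
    assert (0 < k * i * f r) by (apply Rmult_lt_0_compat; nra).
    assert (0 <= (k - 1) * i * (- l * (1 - i - r))) by (apply Rmult_le_pos; nra).
    lra.
Qed.

End EndemicEquilibria.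

Theorem proposition2 (k : R) (f : R -> R)
  (hk : 1 < k)
  (hpos : forall x, 0 <= x <= 1 -> 0 < f x)
  (hdiff : forall x, 0 <= x <= 1 -> exists l, derivable_pt_lim f x l)
  (hshape : (exists c, forall x, 0 <= x <= 1 -> f x = c) \/
            (forall x y, 0 <= x -> x <= y -> y <= 1 -> f y <= f x)) :
  (f 0 / k < 1 -> forall i r, ~ endemic_equilibrium f k i r) /\
  (f 0 / k > 1 ->
     exists i r, endemic_equilibrium f k i r /\
       (forall i' r', endemic_equilibrium f k i' r' -> i' = i /\ r' = r) /\
       locally_stable f k i r).
Proof.
  assert (f_noninc : forall x y, 0 <= x -> x <= y -> y <= 1 -> f y <= f x).
  { destruct hshape as [[c f_const] | f_noninc]; [|exact f_noninc].
    intros x y x_ge0 x_le_y y_le1. rewrite (f_const x), (f_const y); lra. }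
  assert (ratio : f 0 / k * k = f 0) by (field; lra).
  split.
  - intros lt1. apply no_endemic_equilibrium; [assumption..|nra].
  - intros gt1.
    destruct (endemic_equilibrium_exists k f hk hdiff ltac:(nra)) as (i & r & EE).
    exists i, r. split; [|split].
    + exact EE.
    + intros i' r'. exact (endemic_equilibrium_unique k f hk hpos f_noninc i r i' r' EE).
    + exact (endemic_equilibrium_locally_stable k f hk hpos hdiff f_noninc i r EE).
Qed.
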